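(* Let $n\ge 4$ be an even integer and let $k\ge 3$ and $m\ge 2$ be integers. Then the metric dimension of $(C_n\square P_k)\square P_m$ is $4$.
   Context: All graphs are finite and connected; $d(u,v)$ is the shortest-path distance. $C_n$ is the cycle on $n$ vertices and $P_k$ the path on $k$ vertices. The cartesian product $G\square H$ has vertex set $V(G)\times V(H)$, with $(g_1,h_1)$ adjacent to $(g_2,h_2)$ iff either $h_1=h_2$ and $g_1g_2\in E(G)$, or $g_1=g_2$ and $h_1h_2\in E(H)$. For an ordered set $Q=\{q_1,\dots,q_l\}$ of vertices, $r(x|Q)=(d(x,q_1),\dots,d(x,q_l))$. $Q$ is a resolving set of $G$ if any two distinct vertices of $G$ have distinct vectors $r(\cdot|Q)$; the metric dimension is the minimum size of a resolving set. *)

From mathcomp Require Import all_boot.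
Set Implicit Arguments. Unset Strict Implicit. Unset Printing Implicit Defensive.

Definition cycle_rel (n : nat) : rel 'I_n :=
  fun i j => (j == (i.+1 %% n) :> nat) || (i == (j.+1 %% n) :> nat).

Definition path_rel (k : nat) : rel 'I_k :=
  fun i j => (j == i.+1 :> nat) || (i == j.+1 :> nat).

Definition cart_rel (T1 T2 : finType) (e1 : rel T1) (e2 : rel T2) : rel (T1 * T2) :=
  fun x y => ((x.2 == y.2) && e1 x.1 y.1) || ((x.1 == y.1) && e2 x.2 y.2).

Definition walk_of_len (T : finType) (e : rel T) (x y : T) (d : nat) : bool :=
  [exists p : d.-tuple T, path e x p && (last x p == y)].

(* In a connected graph such d exists and is < #|T|; (the value #|T| is
   returned only for unreachable pairs, which do not occur here). *)
Definition dist (T : finType) (e : rel T) (x y : T) : nat :=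
  find (walk_of_len e x y) (iota 0 #|T|).

(* r(x|Q) for the ordered set Q (listed in enum order) *)
Definition rvec (T : finType) (e : rel T) (Q : {set T}) (x : T) : seq nat :=
  [seq dist e x q | q <- enum Q].

Definition resolving (T : finType) (e : rel T) (Q : {set T}) : bool :=
  [forall x, forall y, (rvec e Q x == rvec e Q y) ==> (x == y)].

Definition metric_dim (T : finType) (e : rel T) : nat :=
  \big[minn/#|T|]_(Q : {set T} | resolving e Q) #|Q|.
Arguments cycle_rel n : clear implicits.
Arguments path_rel k : clear implicits.

From mathcomp Require Import all_boot zify.
Set Implicit Arguments. Unset Strict Implicit. Unset Printing Implicit Defensive.

(* The distance in C_n □ P_k □ P_m is the sum of the distances of the coordinates.  The
   landmarks (0,0,0), (0,0,m-1), (0,k-1,0) determine both path coordinates, and with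
   (1,0,0) also the cycle coordinate; so 4 landmarks suffice.
   Conversely, fix three landmarks.  As n is even, a unit step in any coordinate changes
   the distance to each landmark by exactly one, with a sign pattern in {±1}^3 taken up
   to global sign (four classes).  If steps in two different coordinates have the same
   pattern, the two neighbours reached by them are twins; if opposite patterns, a vertex
   and its diagonal neighbour are.  When no two landmarks have equal or antipodal cycle
   coordinates, the cycle patterns at the three landmarks are pairwise inequivalent, and
   together with one pattern of each path they give five patterns in four classes.
   Otherwise some landmark q1 shares its antipodal class with q2: reflecting the cycle
   coordinate in q1 keeps the distances to q1 and q2 and shifts the one to the third
   landmark by 2, which a diagonal step in the grid P_k □ P_m compensates. *)

(** * Shortest-path distance functions *)

Lemma find_iota0 (P : pred nat) N i :
  i < N -> P i -> (forall j, j < i -> ~~ P j) -> find P (iota 0 N) = i.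
Proof.
move=> iN Pi notP; have hasP : has P (iota 0 N) by apply/hasP; exists i; rewrite ?mem_iota.
have fN : find P (iota 0 N) < N by rewrite -[X in _ < X](size_iota 0 N) -has_find.
case: (ltngtP (find P (iota 0 N)) i) => // [lt_fi|lt_if].
- by have := nth_find 0 hasP; rewrite nth_iota // add0n (negbTE (notP _ lt_fi)).
- by have := before_find 0 lt_if; rewrite nth_iota ?add0n ?Pi //; lia.
Qed.

Section DistanceFunctions.
Variables (T : finType) (e : rel T).

Definition dist_fun (F : T -> T -> nat) :=
  [/\ forall x y, F x y = 0 -> x = y,
      forall x, F x x = 0,
      forall x x' z, e x x' -> F x z <= (F x' z).+1 &
      forall x z, 0 < F x z -> exists2 x', e x x' & F x z = (F x' z).+1].

Variable F : T -> T -> nat.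
Hypothesis distF : dist_fun F.

Lemma dist_fun_walk_le x y d : walk_of_len e x y d -> F x y <= d.
Proof.
case: distF => _ F0 Flip _ /existsP[p /andP[walk_p /eqP <-]].
suff: F x (last x p) <= size p by rewrite size_tuple.
elim: (tval p) x walk_p => [|z s IHs] x /=.
  by rewrite F0.
by case/andP=> /(Flip _ _ (last z s)) le_xz /IHs le_z; apply: leq_trans le_xz _.
Qed.

Lemma dist_fun_walk x y : walk_of_len e x y (F x y).
Proof.
case: distF => F0 _ _ Fdesc; move Dd: (F x y) => d.
elim: d x Dd => [|d IHd] x Dd.
  by apply/existsP; exists (in_tuple [::]); rewrite /= (F0 _ _ Dd).
have [|x' e_xx' Dx] := Fdesc x y; first by rewrite Dd.
have /existsP[p /andP[walk_p last_p]] := IHd x' (congr1 predn (etrans (esym Dx) Dd)).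
by apply/existsP; exists [tuple of x' :: p]; rewrite /= e_xx' walk_p.
Qed.

Lemma dist_fun_dist x y : F x y < #|T| -> dist e x y = F x y.
Proof.
move=> FxyT; apply: find_iota0 FxyT (dist_fun_walk x y) _ => j ltj.
by apply/negP => /dist_fun_walk_le; rewrite leqNgt ltj.
Qed.

End DistanceFunctions.

Lemma dist_fun_cart (T1 T2 : finType) (e1 : rel T1) (e2 : rel T2) F1 F2 :
  dist_fun e1 F1 -> dist_fun e2 F2 ->
  dist_fun (cart_rel e1 e2) (fun x y => F1 x.1 y.1 + F2 x.2 y.2).
Proof.
case=> F1_0 F1_refl F1_lip F1_desc [F2_0 F2_refl F2_lip F2_desc]; split.
- by move=> [x1 x2] [y1 y2] /= /eqP; rewrite addn_eq0 => /andP[/eqP/F1_0-> /eqP/F2_0->].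
- by move=> x; rewrite F1_refl F2_refl.
- move=> [x1 x2] [y1 y2] [z1 z2]; rewrite /cart_rel /=.
  case/orP=> /andP[/eqP<- e_xy]; first by have := F1_lip _ _ z1 e_xy; lia.
  by have := F2_lip _ _ z2 e_xy; lia.
- move=> [x1 x2] [z1 z2] /= Fpos; have [F1x0|F1xpos] := posnP (F1 x1 z1).
    have [|x' e_xx' Dx] := F2_desc x2 z2; first lia.
    by exists (x1, x'); rewrite /cart_rel /= ?eqxx ?e_xx' ?orbT //; lia.
  have [x' e_xx' Dx] := F1_desc _ _ F1xpos.
  by exists (x', x2); rewrite /cart_rel /= ?eqxx ?e_xx' //; lia.
Qed.

(** * Paths and cycles *)

Definition distn (a b : nat) := (a - b) + (b - a).
Definition cdist (n a b : nat) := minn (distn a b) (n - distn a b).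
Definition csucc (n a : nat) := if a.+1 < n then a.+1 else 0.
Definition cpred (n a : nat) := if 0 < a then a.-1 else n.-1.

Lemma dist_fun_path k : dist_fun (path_rel k) (fun x y : 'I_k => distn x y).
Proof.
split=> [x y|x|x x' z|x z]; rewrite /distn.
- by move=> xy0; apply: val_inj => /=; lia.
- lia.
- by rewrite /path_rel => /orP[] /eqP; lia.
- move=> Fpos; have [lt_xz|lt_zx|eq_xz] := ltngtP x z; last lia.
  + have x1k : x.+1 < k by apply: leq_trans (ltn_ord z).
    by exists (Ordinal x1k); rewrite /path_rel /= ?eqxx //; lia.
  + have x1k : x.-1 < k by apply: leq_ltn_trans (leq_pred _) (ltn_ord x).
    by exists (Ordinal x1k); rewrite /path_rel /=; lia.
Qed.

Lemma csucc_lt n a : a < n -> csucc n a < n.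
Proof. by rewrite /csucc; case: ifP; lia. Qed.

Lemma cpred_lt n a : a < n -> cpred n a < n.
Proof. by rewrite /cpred; case: ifP; lia. Qed.

Lemma modn_succ n a : a < n -> a.+1 %% n = csucc n a.
Proof.
rewrite /csucc => lt_an; case: ifP => [|/negbT]; first exact: modn_small.
by rewrite -leqNgt => le_na; rewrite (_ : a.+1 = n) ?modnn //; lia.
Qed.

Lemma cpredK n a : a < n -> csucc n (cpred n a) = a.
Proof. by rewrite /csucc /cpred => lt_an; case: (posnP a) => a0 /=; case: ifP; lia. Qed.

Lemma dist_fun_cycle n : 3 <= n -> dist_fun (cycle_rel n) (fun x y : 'I_n => cdist n x y).
Proof.
move=> n3; split=> [x y|x|x x' z|x z]; have := ltn_ord x; rewrite /cdist /distn.
- by have := ltn_ord y => ? ? xy0; apply: val_inj => /=; lia.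
- lia.
- have := ltn_ord x'; have := ltn_ord z => ? ? ?.
  rewrite /cycle_rel !modn_succ // /csucc; case: ifP => ?; case: ifP => ?; case/orP=> /eqP; lia.
- have := ltn_ord z => lt_zn lt_xn Fpos.
  have e_succ : cycle_rel n x (Ordinal (csucc_lt lt_xn)).
    by rewrite /cycle_rel modn_succ ?eqxx.
  have e_pred : cycle_rel n x (Ordinal (cpred_lt lt_xn)).
    by rewrite /cycle_rel /= !modn_succ ?cpred_lt // cpredK // eqxx orbT.
  have [lt_xz|lt_zx|eq_xz] := ltngtP x z; last lia.
  + have [le_half|lt_half] := leqP (z - x) (n - (z - x)).
    * by exists (Ordinal (csucc_lt lt_xn)); rewrite //= /csucc; case: ifP; lia.
    * by exists (Ordinal (cpred_lt lt_xn)); rewrite //= /cpred; case: ifP; lia.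
  + have [le_half|lt_half] := leqP (x - z) (n - (x - z)).
    * by exists (Ordinal (cpred_lt lt_xn)); rewrite //= /cpred; case: ifP; lia.
    * by exists (Ordinal (csucc_lt lt_xn)); rewrite //= /csucc; case: ifP; lia.
Qed.

Definition signed_step (u v : nat) (up : bool) := if up then v == u.+1 else u == v.+1.

Definition antipode (n h a : nat) := if a + h < n then a + h else a - h.
Definition antipodal (n h a b : nat) := (b == a) || (b == antipode n h a).
Definition moves_away (n a b : nat) := cdist n (csucc n a) b == (cdist n a b).+1.

Ltac cycle_arith :=
  rewrite /csucc /cpred /antipode /cdist /distn; repeat (case: ifP => ?); lia.

Section EvenCycle.
Variables (n h : nat).
Hypotheses (n_2h : n = h + h) (h_ge2 : 2 <= h).

Lemma cdist_le_half a b : a < n -> b < n -> cdist n a b <= h.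
Proof. move=> *; cycle_arith. Qed.

Lemma cdist_antipode a b : a < n -> b < n -> cdist n a (antipode n h b) = h - cdist n a b.
Proof. move=> *; cycle_arith. Qed.

Lemma cdist_succ a b : a < n -> b < n ->
  cdist n (csucc n a) b = (cdist n a b).+1 \/ cdist n a b = (cdist n (csucc n a) b).+1.
Proof. move=> *; cycle_arith. Qed.

Lemma cdist_step a b : a < n -> b < n ->
  signed_step (cdist n a b) (cdist n (csucc n a) b) (moves_away n a b).
Proof.
move=> lt_an lt_bn; rewrite /signed_step /moves_away.
by case: eqP => // ne; case: (cdist_succ lt_an lt_bn) => [/ne|->].
Qed.

Lemma moves_away_refl a : a < n -> moves_away n a a.
Proof. by move=> ?; apply/eqP; cycle_arith. Qed.

Lemma moves_away_antipode a b : a < n -> b < n ->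
  moves_away n a (antipode n h b) = ~~ moves_away n a b.
Proof.
move=> lt_an lt_bn; rewrite /moves_away !cdist_antipode ?csucc_lt //.
have := cdist_succ lt_an lt_bn; have := cdist_le_half (csucc_lt lt_an) lt_bn.
by have := cdist_le_half lt_an lt_bn; case: eqP => ?; case: eqP => ? //=; lia.
Qed.

Lemma moves_awayE a b : a < n -> b < n ->
  moves_away n a b = if b <= a then a - b < h else h < b - a.
Proof.
move=> *; rewrite /moves_away; case: ifP => ?; apply/idP/idP => [/eqP|?].
all: try apply/eqP; cycle_arith.
Qed.

Lemma moves_away_sym a b : a < n -> b < n -> ~~ antipodal n h a b ->
  moves_away n a b = ~~ moves_away n b a.
Proof.
rewrite /antipodal negb_or /antipode => lt_an lt_bn /andP[/eqP neq_ba /eqP neq_b_anti].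
rewrite !moves_awayE //; move: neq_b_anti; case: ifP => ? ?.
all: by case: ifP => ?; case: ifP => ?; case: ltnP => ?; case: ltnP => ? //=; lia.
Qed.

Lemma antipodal_sym a b : a < n -> b < n -> antipodal n h a b = antipodal n h b a.
Proof.
rewrite /antipodal /antipode => lt_an lt_bn; case: (a =P b) => [->|?]; first by rewrite eqxx.
by case: ifP => ?; case: ifP => ?; case: eqP => ?; case: eqP => ? //=; lia.
Qed.

Lemma csucc_neq_cpred a : a < n -> csucc n a != cpred n a.
Proof. by move=> ?; apply/eqP; cycle_arith. Qed.

Lemma cdist_succ_pred a b : a < n -> antipodal n h a b ->
  cdist n (csucc n a) b = cdist n (cpred n a) b.
Proof. by move=> ? /orP[] /eqP ->; cycle_arith. Qed.

Lemma cdist_succ_pred_gap a b : a < n -> b < n -> ~~ antipodal n h a b ->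
  cdist n (csucc n a) b = cdist n (cpred n a) b + 2 \/
  cdist n (cpred n a) b = cdist n (csucc n a) b + 2.
Proof.
move=> lt_an lt_bn not_ab; have lt_pn := cpred_lt lt_an.
have same_side : moves_away n (cpred n a) b = moves_away n a b.
  rewrite !moves_awayE //; move: not_ab lt_pn.
  rewrite /antipodal negb_or /antipode /cpred => /andP[/eqP ?].
  by repeat (case: ifP => ?); move=> /eqP ? ?; apply/idP/idP => ?; lia.
have := cdist_step lt_an lt_bn; have := cdist_step lt_pn lt_bn.
rewrite cpredK // same_side /signed_step.
by case: (moves_away n a b) => ? ?; [left|right]; lia.
Qed.

Lemma cdist_reflection a0 b1 b2 b3 : a0 < n -> b3 < n ->
  antipodal n h a0 b1 -> antipodal n h a0 b2 -> ~~ antipodal n h a0 b3 ->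
  exists a a', [/\ a < n, a' < n, a <> a' &
    [/\ cdist n a b1 = cdist n a' b1, cdist n a b2 = cdist n a' b2 &
        cdist n a b3 + 2 = cdist n a' b3]].
Proof.
move=> lt_a0n lt_b3n a1 a2 a3; have neq := csucc_neq_cpred lt_a0n.
have [s1 s2] := (cdist_succ_pred lt_a0n a1, cdist_succ_pred lt_a0n a2).
have [gap|gap] := cdist_succ_pred_gap lt_a0n lt_b3n a3.
- exists (cpred n a0), (csucc n a0); split; [exact: cpred_lt | exact: csucc_lt | | by []].
  by move/eqP; rewrite eq_sym (negbTE neq).
- exists (csucc n a0), (cpred n a0); split; [exact: csucc_lt | exact: cpred_lt | | by []].
  by move/eqP; rewrite (negbTE neq).
Qed.

End EvenCycle.

(** * Twins for three landmarks *)

Lemma distn_step b q : signed_step (distn b q) (distn b.+1 q) (q <= b).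
Proof. by rewrite /signed_step /distn; case: leqP => ?; lia. Qed.

Lemma signed_step_addr u v w up : signed_step u v up -> signed_step (u + w) (v + w) up.
Proof. by rewrite /signed_step; case: up; lia. Qed.

Lemma signed_step_addl u v w up : signed_step u v up -> signed_step (w + u) (w + v) up.
Proof. by rewrite /signed_step; case: up; lia. Qed.

Lemma signed_step_eq u v w up : signed_step u v up -> signed_step u w up -> v = w.
Proof. by rewrite /signed_step; case: up; lia. Qed.

Lemma signed_step_opp u v w up : signed_step u v (~~ up) -> signed_step v w up -> u = w.
Proof. by rewrite /signed_step; case: up => /=; lia. Qed.

Definition prism_dist (n : nat) (x y : nat * nat * nat) :=
  cdist n x.1.1 y.1.1 + distn x.1.2 y.1.2 + distn x.2 y.2.

Definition in_box (n k m : nat) (x : nat * nat * nat) := [&& x.1.1 < n, x.1.2 < k & x.2 < m].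

Definition twins (n k m : nat) (s : seq (nat * nat * nat)) :=
  exists x y, [/\ in_box n k m x, in_box n k m y, x <> y &
                  {in s, forall q, prism_dist n x q = prism_dist n y q}].

Lemma twins_sub n k m s s' : {subset s' <= s} -> twins n k m s -> twins n k m s'.
Proof. by move=> sub_s [x [y [xbox ybox neq_xy eq_xy]]]; exists x, y; split=> // q /sub_s/eq_xy. Qed.

Lemma prism_dist_step_cycle n h a b c q : n = h + h -> 2 <= h -> a < n -> q.1.1 < n ->
  signed_step (prism_dist n (a, b, c) q) (prism_dist n (csucc n a, b, c) q) (moves_away n a q.1.1).
Proof.
move=> n_2h h_ge2 lt_an lt_qn; do 2 apply: signed_step_addr => /=.
exact (cdist_step n_2h h_ge2 lt_an lt_qn).
Qed.

Lemma prism_dist_step_path1 n a b c q :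
  signed_step (prism_dist n (a, b, c) q) (prism_dist n (a, b.+1, c) q) (q.1.2 <= b).
Proof. by apply/signed_step_addr/signed_step_addl/distn_step. Qed.

Lemma prism_dist_step_path2 n a b c q :
  signed_step (prism_dist n (a, b, c) q) (prism_dist n (a, b, c.+1) q) (q.2 <= c).
Proof. by apply/signed_step_addl/distn_step. Qed.

Definition negb3 (u : bool * bool * bool) := (~~ u.1.1, ~~ u.1.2, ~~ u.2).
Definition sign_equiv (u v : bool * bool * bool) := (u == v) || (u == negb3 v).

(* The three triples are the pairwise inequivalent cycle patterns at the landmarks in
   [twins_no_antipodal]; with two more patterns u, v there is no room in four classes. *)
Lemma sign_equiv_pigeonhole (p12 p13 p23 : bool) (u v : bool * bool * bool) :
  [|| sign_equiv (true, p12, p13) u, sign_equiv (~~ p12, true, p23) u,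
      sign_equiv (~~ p13, ~~ p23, true) u, sign_equiv (true, p12, p13) v,
      sign_equiv (~~ p12, true, p23) v, sign_equiv (~~ p13, ~~ p23, true) v |
      sign_equiv u v].
Proof. by case: p12 p13 p23 u v => [] [] [] [[[] []] []] [[[] []] []]. Qed.

Lemma sign_equiv_equal_pair (p x y : bool) :
  sign_equiv (true, true, p) (x, x, y) || sign_equiv (~~ p, ~~ p, true) (x, x, y).
Proof. by case: p x y => [] [] []. Qed.

Lemma sign_equiv_opposite_pair (p x y : bool) :
  sign_equiv (true, false, p) (x, ~~ x, y) || sign_equiv (~~ p, p, true) (x, ~~ x, y).
Proof. by case: p x y => [] [] []. Qed.

Definition in_grid (k m : nat) (u : nat * nat) := (u.1 < k) && (u.2 < m).
Definition diag_adj (u v : nat * nat) := (distn u.1 v.1 == 1) && (distn u.2 v.2 == 1).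
Definition grid_dist (u : nat * nat) (q : nat * nat * nat) := distn u.1 q.1.2 + distn u.2 q.2.

Lemma grid_dist_diag u v q : diag_adj u v ->
  grid_dist u q = grid_dist v q \/ grid_dist u q + 2 = grid_dist v q \/
  grid_dist v q + 2 = grid_dist u q.
Proof. by rewrite /diag_adj /grid_dist /distn => /andP[/eqP ? /eqP ?]; lia. Qed.

Lemma diag_adj_opposite_corners k m (q q' : nat * nat * nat) : 2 <= k -> 2 <= m ->
  (q.1.2 = 0 /\ q'.1.2 = k.-1) \/ (q.1.2 = k.-1 /\ q'.1.2 = 0) ->
  (q.2 = 0 /\ q'.2 = m.-1) \/ (q.2 = m.-1 /\ q'.2 = 0) ->
  exists u v, [/\ in_grid k m u, in_grid k m v, diag_adj u v,
                  grid_dist u q = grid_dist v q & grid_dist u q' = grid_dist v q'].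
Proof.
rewrite /in_grid /diag_adj /grid_dist /distn => k2 m2.
case=> -[-> ->] [] [-> ->]; [exists (0, 1), (1, 0) | exists (0, 0), (1, 1)
  | exists (0, 0), (1, 1) | exists (0, 1), (1, 0)]; split=> //=; lia.
Qed.

Lemma diag_adj_corner k m (q : nat * nat * nat) : 2 <= k -> 2 <= m -> q.1.2 < k -> q.2 < m ->
  exists u v, [/\ in_grid k m u, in_grid k m v, diag_adj u v & grid_dist u q = grid_dist v q].
Proof.
rewrite /in_grid /diag_adj /grid_dist /distn => k2 m2 qk qm.
have [b' b'k db'] : exists2 b', b' < k & distn b' q.1.2 = 1.
  by case: (ltnP q.1.2.+1 k) => ?; [exists q.1.2.+1 | exists q.1.2.-1]; rewrite /distn; lia.
have [c' c'm dc'] : exists2 c', c' < m & distn q.2 c' = 1.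
  by case: (ltnP q.2.+1 m) => ?; [exists q.2.+1 | exists q.2.-1]; rewrite /distn; lia.
exists (b', q.2), (q.1.2, c'); move: db' dc'; rewrite /distn /= => ? ?.
by split=> /=; try (apply/andP; split); try apply/eqP; lia.
Qed.

Section ThreeLandmarks.
Variables (n h k m : nat) (q1 q2 q3 : nat * nat * nat).
Hypotheses (n_2h : n = h + h) (h_ge2 : 2 <= h) (k_ge3 : 3 <= k) (m_ge2 : 2 <= m).
Hypotheses (q1_box : in_box n k m q1) (q2_box : in_box n k m q2) (q3_box : in_box n k m q3).

Local Notation twins3 := (twins n k m [:: q1; q2; q3]).

Let q1n : q1.1.1 < n. Proof. by case/and3P: q1_box. Qed.
Let q2n : q2.1.1 < n. Proof. by case/and3P: q2_box. Qed.
Let q3n : q3.1.1 < n. Proof. by case/and3P: q3_box. Qed.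

Let away_refl := moves_away_refl n_2h h_ge2.
Let away_sym := moves_away_sym n_2h h_ge2.
Let away_antipode := moves_away_antipode n_2h h_ge2.

Lemma in_landmarks (P : nat * nat * nat -> Prop) :
  P q1 -> P q2 -> P q3 -> {in [:: q1; q2; q3], forall q, P q}.
Proof. by move=> ? ? ? q; rewrite !inE => /or3P[] /eqP->. Qed.

Definition pattern (P : pred (nat * nat * nat)) := (P q1, P q2, P q3).
Definition cycle_pattern a := pattern (fun q => moves_away n a q.1.1).
Definition path1_pattern b := pattern (fun q => q.1.2 <= b).
Definition path2_pattern c := pattern (fun q => q.2 <= c).

(* Equal patterns make x1 and x2 twins, opposite ones make x and x12 twins. *)
Lemma twins_of_steps x x1 x2 x12 (P1 P2 : pred (nat * nat * nat)) :
  in_box n k m x -> in_box n k m x1 -> in_box n k m x2 -> in_box n k m x12 ->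
  x1 <> x2 -> x <> x12 ->
  (forall q, q.1.1 < n -> signed_step (prism_dist n x q) (prism_dist n x1 q) (P1 q)) ->
  (forall q, q.1.1 < n -> signed_step (prism_dist n x q) (prism_dist n x2 q) (P2 q)) ->
  (forall q, q.1.1 < n -> signed_step (prism_dist n x1 q) (prism_dist n x12 q) (P2 q)) ->
  sign_equiv (pattern P1) (pattern P2) -> twins3.
Proof.
move=> xbox x1box x2box x12box neq12 neq0 step1 step2 step12.
case/orP=> /eqP[E1 E2 E3]; [exists x1, x2 | exists x, x12]; split=> //.
- have same q : q.1.1 < n -> P1 q = P2 q -> prism_dist n x1 q = prism_dist n x2 q.
    by move=> qn E; apply: signed_step_eq (step1 q qn) _; rewrite E; apply: step2.
  by apply: in_landmarks; apply: same.
- have opp q : q.1.1 < n -> P1 q = ~~ P2 q -> prism_dist n x q = prism_dist n x12 q.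
    by move=> qn E; apply: signed_step_opp (step12 q qn); rewrite -E; apply: step1.
  by apply: in_landmarks; apply: opp.
Qed.

Lemma twins_cycle_path1 a b : a < n -> b.+1 < k ->
  sign_equiv (cycle_pattern a) (path1_pattern b) -> twins3.
Proof.
move=> lt_an lt_bk; apply: (twins_of_steps (x := (a, b, 0)) (x1 := (csucc n a, b, 0))
  (x2 := (a, b.+1, 0)) (x12 := (csucc n a, b.+1, 0))); rewrite /in_box /= ?csucc_lt //.
all: try by [lia | case; lia].
- by move=> q; apply (prism_dist_step_cycle _ _ n_2h h_ge2 lt_an).
- by move=> q _; apply: prism_dist_step_path1.
- by move=> q _; apply: prism_dist_step_path1.
Qed.

Lemma twins_cycle_path2 a c : a < n -> c.+1 < m ->
  sign_equiv (cycle_pattern a) (path2_pattern c) -> twins3.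
Proof.
move=> lt_an lt_cm; apply: (twins_of_steps (x := (a, 0, c)) (x1 := (csucc n a, 0, c))
  (x2 := (a, 0, c.+1)) (x12 := (csucc n a, 0, c.+1))); rewrite /in_box /= ?csucc_lt //.
all: try by [lia | case; lia].
- by move=> q; apply (prism_dist_step_cycle _ _ n_2h h_ge2 lt_an).
- by move=> q _; apply: prism_dist_step_path2.
- by move=> q _; apply: prism_dist_step_path2.
Qed.

Lemma twins_path1_path2 b c : b.+1 < k -> c.+1 < m ->
  sign_equiv (path1_pattern b) (path2_pattern c) -> twins3.
Proof.
move=> lt_bk lt_cm; apply: (twins_of_steps (x := (0, b, c)) (x1 := (0, b.+1, c))
  (x2 := (0, b, c.+1)) (x12 := (0, b.+1, c.+1))); rewrite /in_box /=.
all: try by [lia | case; lia].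
- by move=> q _; apply: prism_dist_step_path1.
- by move=> q _; apply: prism_dist_step_path2.
- by move=> q _; apply: prism_dist_step_path2.
Qed.

Lemma twins_cycle_grid a a' (u v : nat * nat) :
  a < n -> a' < n -> in_grid k m u -> in_grid k m v -> (a, u) <> (a', v) ->
  cdist n a q1.1.1 + grid_dist u q1 = cdist n a' q1.1.1 + grid_dist v q1 ->
  cdist n a q2.1.1 + grid_dist u q2 = cdist n a' q2.1.1 + grid_dist v q2 ->
  cdist n a q3.1.1 + grid_dist u q3 = cdist n a' q3.1.1 + grid_dist v q3 -> twins3.
Proof.
case: u v => [b c] [b' c'] lt_an lt_a'n /andP[lt_bk lt_cm] /andP[lt_b'k lt_c'm] neq d1 d2 d3.
exists (a, b, c), (a', b', c'); split; try exact/and3P.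
  by case=> ? ? ?; apply: neq; congr (_, (_, _)).
by apply: in_landmarks; move: d1 d2 d3; rewrite /prism_dist /grid_dist /=; lia.
Qed.

Lemma twins_reflect a0 (u v : nat * nat) :
  a0 < n -> in_grid k m u -> in_grid k m v -> diag_adj u v ->
  antipodal n h a0 q1.1.1 -> antipodal n h a0 q2.1.1 -> ~~ antipodal n h a0 q3.1.1 ->
  grid_dist u q1 = grid_dist v q1 -> grid_dist u q2 = grid_dist v q2 -> twins3.
Proof.
move=> lt_a0n ugrid vgrid adj_uv a1 a2 a3 g1 g2.
have neq_uv : u <> v.
  by move=> eq_uv; move: adj_uv; rewrite eq_uv /diag_adj /distn => /andP[/eqP]; lia.
have [a [a' [lt_an lt_a'n neq_aa' [c1 c2 c3]]]] :=
  cdist_reflection n_2h h_ge2 lt_a0n q3n a1 a2 a3.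
have [g3|[g3|g3]] := grid_dist_diag q3 adj_uv.
- by apply: (twins_cycle_grid lt_a0n lt_a0n ugrid vgrid); [case | rewrite g1 | rewrite g2 | rewrite g3].
- apply: (twins_cycle_grid lt_a'n lt_an ugrid vgrid); [by case=> /esym | | | ].
  + by rewrite c1 g1.
  + by rewrite c2 g2.
  + by rewrite -c3 -g3 addnAC addnA.
- apply: (twins_cycle_grid lt_an lt_a'n ugrid vgrid); [by case | | | ].
  + by rewrite c1 g1.
  + by rewrite c2 g2.
  + by rewrite -c3 -g3 addnAC addnA.
Qed.

Lemma twins_all_antipodal :
  antipodal n h q1.1.1 q2.1.1 -> antipodal n h q1.1.1 q3.1.1 -> twins3.
Proof.
move=> a12 a13; have a11 : antipodal n h q1.1.1 q1.1.1 by rewrite /antipodal eqxx.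
exists (csucc n q1.1.1, 0, 0), (cpred n q1.1.1, 0, 0); split.
- by rewrite /in_box /= csucc_lt //; lia.
- by rewrite /in_box /= cpred_lt //; lia.
- by case=> /eqP; rewrite (negbTE (csucc_neq_cpred n_2h h_ge2 q1n)).
- by apply: in_landmarks; rewrite /prism_dist /= (cdist_succ_pred n_2h h_ge2 q1n).
Qed.

Lemma twins_no_antipodal : ~~ antipodal n h q1.1.1 q2.1.1 ->
  ~~ antipodal n h q1.1.1 q3.1.1 -> ~~ antipodal n h q2.1.1 q3.1.1 -> twins3.
Proof.
move=> a12 a13 a23.
have p1 : cycle_pattern q1.1.1 =
    (true, moves_away n q1.1.1 q2.1.1, moves_away n q1.1.1 q3.1.1).
  by rewrite /cycle_pattern /pattern away_refl.
have p2 : cycle_pattern q2.1.1 =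
    (~~ moves_away n q1.1.1 q2.1.1, true, moves_away n q2.1.1 q3.1.1).
  by rewrite /cycle_pattern /pattern away_refl // (away_sym q1n q2n a12) negbK.
have p3 : cycle_pattern q3.1.1 =
    (~~ moves_away n q1.1.1 q3.1.1, ~~ moves_away n q2.1.1 q3.1.1, true).
  rewrite /cycle_pattern /pattern away_refl //.
  by rewrite (away_sym q1n q3n a13) (away_sym q2n q3n a23) !negbK.
have lt1k : 1 < k by lia.
have := sign_equiv_pigeonhole (moves_away n q1.1.1 q2.1.1) (moves_away n q1.1.1 q3.1.1)
  (moves_away n q2.1.1 q3.1.1) (path1_pattern 0) (path2_pattern 0).
rewrite -p1 -p2 -p3 => /or4P[|||/or4P[]].
1-3: exact: twins_cycle_path1.
1-3: exact: twins_cycle_path2.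
exact: twins_path1_path2.
Qed.

Lemma twins_equal_pair : q2.1.1 = q1.1.1 -> ~~ antipodal n h q1.1.1 q3.1.1 -> twins3.
Proof.
move=> E a13; set p := moves_away n q1.1.1 q3.1.1.
have p1 : cycle_pattern q1.1.1 = (true, true, p).
  by rewrite /cycle_pattern /pattern E away_refl.
have p3 : cycle_pattern q3.1.1 = (~~ p, ~~ p, true).
  by rewrite /cycle_pattern /pattern E away_refl // /p (away_sym q1n q3n a13) negbK.
have by_path1 b : b.+1 < k -> (q1.1.2 <= b) = (q2.1.2 <= b) -> twins3.
  move=> lt_bk Eb; have := sign_equiv_equal_pair p (q1.1.2 <= b) (q3.1.2 <= b).
  have -> : (q1.1.2 <= b, q1.1.2 <= b, q3.1.2 <= b) = path1_pattern b.
    by rewrite /path1_pattern /pattern Eb.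
  by rewrite -p1 -p3 => /orP[]; apply: twins_cycle_path1.
have by_path2 c : c.+1 < m -> (q1.2 <= c) = (q2.2 <= c) -> twins3.
  move=> lt_cm Ec; have := sign_equiv_equal_pair p (q1.2 <= c) (q3.2 <= c).
  have -> : (q1.2 <= c, q1.2 <= c, q3.2 <= c) = path2_pattern c.
    by rewrite /path2_pattern /pattern Ec.
  by rewrite -p1 -p3 => /orP[]; apply: twins_cycle_path2.
have /and3P[_ q1k q1m] := q1_box; have /and3P[_ q2k q2m] := q2_box.
have [|b0] := eqVneq (q1.1.2 <= 0) (q2.1.2 <= 0); first by apply: by_path1; lia.
have [|bk] := eqVneq (q1.1.2 <= k.-2) (q2.1.2 <= k.-2); first by apply: by_path1; lia.
have [|c0] := eqVneq (q1.2 <= 0) (q2.2 <= 0); first by apply: by_path2; lia.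
have [|cm] := eqVneq (q1.2 <= m.-2) (q2.2 <= m.-2); first by apply: by_path2; lia.
(* No path step separates q1 from q2: they lie at opposite corners of the grid. *)
have Eb : (q1.1.2 = 0 /\ q2.1.2 = k.-1) \/ (q1.1.2 = k.-1 /\ q2.1.2 = 0).
  by move: b0 bk; do 4 case: leqP => ? //=; lia.
have Ec : (q1.2 = 0 /\ q2.2 = m.-1) \/ (q1.2 = m.-1 /\ q2.2 = 0).
  by move: c0 cm; do 4 case: leqP => ? //=; lia.
have a1 : antipodal n h q1.1.1 q1.1.1 by rewrite /antipodal eqxx.
have a2 : antipodal n h q1.1.1 q2.1.1 by rewrite /antipodal E eqxx.
have [u [v [ugrid vgrid adj_uv g1 g2]]] := diag_adj_opposite_corners (ltnW k_ge3) m_ge2 Eb Ec.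
exact: (twins_reflect q1n ugrid vgrid adj_uv).
Qed.

Lemma twins_antipodal_pair :
  q2.1.1 = antipode n h q1.1.1 -> ~~ antipodal n h q1.1.1 q3.1.1 -> twins3.
Proof.
move=> E a13; set p := moves_away n q1.1.1 q3.1.1.
have p1 : cycle_pattern q1.1.1 = (true, false, p).
  by rewrite /cycle_pattern /pattern E away_antipode // away_refl.
have p3 : cycle_pattern q3.1.1 = (~~ p, p, true).
  rewrite /cycle_pattern /pattern E away_antipode // away_refl //.
  by rewrite /p (away_sym q1n q3n a13) negbK.
have by_path1 b : b.+1 < k -> (q2.1.2 <= b) = ~~ (q1.1.2 <= b) -> twins3.
  move=> lt_bk Eb; have := sign_equiv_opposite_pair p (q1.1.2 <= b) (q3.1.2 <= b).
  have -> : (q1.1.2 <= b, ~~ (q1.1.2 <= b), q3.1.2 <= b) = path1_pattern b.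
    by rewrite /path1_pattern /pattern Eb.
  by rewrite -p1 -p3 => /orP[]; apply: twins_cycle_path1.
have by_path2 c : c.+1 < m -> (q2.2 <= c) = ~~ (q1.2 <= c) -> twins3.
  move=> lt_cm Ec; have := sign_equiv_opposite_pair p (q1.2 <= c) (q3.2 <= c).
  have -> : (q1.2 <= c, ~~ (q1.2 <= c), q3.2 <= c) = path2_pattern c.
    by rewrite /path2_pattern /pattern Ec.
  by rewrite -p1 -p3 => /orP[]; apply: twins_cycle_path2.
have /and3P[_ q1k q1m] := q1_box; have /and3P[_ q2k q2m] := q2_box.
have [lt_b|lt_b|eq_b] := ltngtP q1.1.2 q2.1.2.
- by apply: (by_path1 q1.1.2); [exact: leq_ltn_trans lt_b q2k | rewrite leqnn leqNgt lt_b].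
- by apply: (by_path1 q2.1.2); [exact: leq_ltn_trans lt_b q1k | rewrite leqnn leqNgt lt_b].
have [lt_c|lt_c|eq_c] := ltngtP q1.2 q2.2.
- by apply: (by_path2 q1.2); [exact: leq_ltn_trans lt_c q2m | rewrite leqnn leqNgt lt_c].
- by apply: (by_path2 q2.2); [exact: leq_ltn_trans lt_c q1m | rewrite leqnn leqNgt lt_c].
have a1 : antipodal n h q1.1.1 q1.1.1 by rewrite /antipodal eqxx.
have a2 : antipodal n h q1.1.1 q2.1.1 by rewrite /antipodal E eqxx orbT.
have [u [v [ugrid vgrid adj_uv g1]]] := diag_adj_corner (ltnW k_ge3) m_ge2 q1k q1m.
apply: (twins_reflect q1n ugrid vgrid adj_uv) => //.
by rewrite /grid_dist -eq_b -eq_c.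
Qed.

End ThreeLandmarks.

Lemma twins_of_three n h k m q1 q2 q3 : n = h + h -> 2 <= h -> 3 <= k -> 2 <= m ->
  in_box n k m q1 -> in_box n k m q2 -> in_box n k m q3 -> twins n k m [:: q1; q2; q3].
Proof.
move=> n_2h h_ge2 k_ge3 m_ge2 box1 box2 box3.
have /and3P[q1n _ _] := box1; have /and3P[q2n _ _] := box2.
have antipodal_pair q q' q'' : in_box n k m q -> in_box n k m q' -> in_box n k m q'' ->
    antipodal n h q.1.1 q'.1.1 -> ~~ antipodal n h q.1.1 q''.1.1 -> twins n k m [:: q; q'; q''].
  move=> box box' box'' /orP[] /eqP E a.
  - exact: twins_equal_pair n_2h h_ge2 k_ge3 m_ge2 box box' box'' E a.
  - exact: twins_antipodal_pair n_2h h_ge2 k_ge3 m_ge2 box box' box'' E a.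
have [a12|a12] := boolP (antipodal n h q1.1.1 q2.1.1).
  have [a13|a13] := boolP (antipodal n h q1.1.1 q3.1.1); first exact: twins_all_antipodal n_2h h_ge2 k_ge3 m_ge2 box1 box2 box3 a12 a13.
  exact: antipodal_pair.
have [a13|a13] := boolP (antipodal n h q1.1.1 q3.1.1).
  apply: twins_sub (antipodal_pair _ _ _ box1 box3 box2 a13 a12).
  by move=> q; rewrite !inE => /or3P[] ->; rewrite ?orbT.
have [a23|a23] := boolP (antipodal n h q2.1.1 q3.1.1); last exact: twins_no_antipodal n_2h h_ge2 k_ge3 m_ge2 box1 box2 box3 a12 a13 a23.
rewrite (antipodal_sym n_2h h_ge2 q1n q2n) in a12.
apply: twins_sub (antipodal_pair _ _ _ box2 box3 box1 a23 a12).
by move=> q; rewrite !inE => /or3P[] ->; rewrite ?orbT.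
Qed.

(** * The prism C_n □ P_k □ P_m *)

Lemma cdist_inj01 n a a' : 3 <= n -> a < n -> a' < n ->
  cdist n a 0 = cdist n a' 0 -> cdist n a 1 = cdist n a' 1 -> a = a'.
Proof. by rewrite /cdist /distn; lia. Qed.

Lemma distn0 a : distn a 0 = a.
Proof. by rewrite /distn subn0 sub0n addn0. Qed.

Lemma distn_pred a k : a < k -> distn a k.-1 = k.-1 - a.
Proof. by rewrite /distn; lia. Qed.

Definition corner_coords (k m : nat) := [:: (0, 0, 0); (0, 0, m.-1); (0, k.-1, 0); (1, 0, 0)].

Lemma corner_dists_inj n k m x y : 3 <= n -> in_box n k m x -> in_box n k m y ->
  {in corner_coords k m, forall q, prism_dist n x q = prism_dist n y q} -> x = y.
Proof.
case: x y => [[a b] c] [[a' b'] c'] n3 /and3P[/= an bk cm] /and3P[/= a'n b'k c'm] eq_xy.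
have := eq_xy (0, 0, 0); have := eq_xy (0, 0, m.-1).
have := eq_xy (0, k.-1, 0); have := eq_xy (1, 0, 0).
rewrite !inE !eqxx ?orbT /prism_dist /= !distn0 !distn_pred //.
move=> /(_ isT) E4 /(_ isT) E3 /(_ isT) E2 /(_ isT) E1.
have Ec : c = c' by lia.
have Eb : b = b' by lia.
have Ea : a = a' by apply: (cdist_inj01 n3 an a'n); lia.
by rewrite Ea Eb Ec.
Qed.

Lemma big_minn_le (I : eqType) (r : seq I) (P : pred I) (F : I -> nat) x i :
  i \in r -> P i -> \big[minn/x]_(j <- r | P j) F j <= F i.
Proof.
elim: r => // j r IHr; rewrite inE big_cons => /orP[/eqP <-|ir] Pi; first by rewrite Pi geq_minl.
by case: (P j); [apply: leq_trans (geq_minr _ _) (IHr ir Pi) | apply: IHr].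
Qed.

Lemma metric_dim_eq (T : finType) (e : rel T) (Q : {set T}) d :
  resolving e Q -> #|Q| <= d -> (forall Q', resolving e Q' -> d <= #|Q'|) ->
  metric_dim e = d.
Proof.
move=> resQ Qd dmin; apply/eqP; rewrite eqn_leq; apply/andP; split.
  have le_dimQ : metric_dim e <= #|Q| by apply: big_minn_le (mem_index_enum Q) resQ.
  exact: leq_trans le_dimQ Qd.
apply: (big_ind (fun v => d <= v)) => [|v w dv dw|]; last exact: dmin.
- exact: leq_trans (dmin Q resQ) (max_card _).
- by rewrite leq_min dv dw.
Qed.

Section Prism.
Variables n k m : nat.

Local Notation prism := (cart_rel (cart_rel (cycle_rel n) (path_rel k)) (path_rel m)).

Definition coords (x : 'I_n * 'I_k * 'I_m) := (val x.1.1, val x.1.2, val x.2).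

Lemma coords_box x : in_box n k m (coords x).
Proof. by rewrite /in_box /= !ltn_ord. Qed.

Lemma coords_inj : injective coords.
Proof. by move=> [[a b] c] [[a' b'] c'] [/val_inj-> /val_inj-> /val_inj->]. Qed.

Lemma box_coords y : in_box n k m y -> exists x, coords x = y.
Proof.
by case: y => [[a b] c] /and3P[/= an bk cm]; exists (Ordinal an, Ordinal bk, Ordinal cm).
Qed.

Lemma twins_of_card_le3 h (Q : {set 'I_n * 'I_k * 'I_m}) :
  n = h + h -> 2 <= h -> 3 <= k -> 2 <= m -> #|Q| <= 3 ->
  twins n k m [seq coords q | q <- enum Q].
Proof.
move=> n_2h h_ge2 k_ge3 m_ge2 Q3; have [n0 k0 m0] : [/\ 0 < n, 0 < k & 0 < m] by split; lia.
pose x0 := (Ordinal n0, Ordinal k0, Ordinal m0); pose q i := nth x0 (enum Q) i.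
apply: twins_sub (twins_of_three n_2h h_ge2 k_ge3 m_ge2
  (coords_box (q 0)) (coords_box (q 1)) (coords_box (q 2))).
move=> y /mapP[x xQ ->]; rewrite -(nth_index x0 xQ).
have : index x (enum Q) < 3 by apply: leq_trans Q3; rewrite cardE index_mem.
by rewrite !inE; case: index => [|[|[|i]]] //= _; rewrite eqxx ?orbT.
Qed.

Hypotheses (n_ge3 : 3 <= n) (k_ge2 : 2 <= k) (m_ge2 : 2 <= m).

Lemma dist_prism x y : dist prism x y = prism_dist n (coords x) (coords y).
Proof.
have distF : dist_fun prism (fun x y => prism_dist n (coords x) (coords y)).
  exact: dist_fun_cart (dist_fun_cart (dist_fun_cycle n_ge3) (dist_fun_path k)) (dist_fun_path m).
apply (dist_fun_dist distF).
rewrite !card_prod !card_ord.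
have km : k + m <= k * m by nia.
have sum_le_prod : n + k + m <= n * k * m by rewrite -mulnA; nia.
case: x y => [[a b] c] [[a' b'] c']; rewrite /prism_dist /cdist /distn /=.
by move: (ltn_ord a) (ltn_ord b) (ltn_ord c) (ltn_ord a') (ltn_ord b') (ltn_ord c'); lia.
Qed.

Lemma rvec_prism (Q : {set 'I_n * 'I_k * 'I_m}) x y : rvec prism Q x = rvec prism Q y <->
  {in Q, forall q, prism_dist n (coords x) (coords q) = prism_dist n (coords y) (coords q)}.
Proof.
rewrite /rvec -eq_in_map; split=> eq_xy q.
- by rewrite -mem_enum => /eq_xy; rewrite !dist_prism.
- by rewrite mem_enum => /eq_xy; rewrite !dist_prism.
Qed.

Lemma twins_not_resolving (Q : {set 'I_n * 'I_k * 'I_m}) :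
  twins n k m [seq coords q | q <- enum Q] -> ~~ resolving prism Q.
Proof.
case=> _ [_ [/box_coords[x <-] /box_coords[y <-] neq_xy eq_xy]].
apply/negP => /forallP/(_ x)/forallP/(_ y)/implyP resQ.
apply: neq_xy; congr coords; apply/eqP/resQ/eqP/rvec_prism => q qQ.
by apply: eq_xy; apply: map_f; rewrite mem_enum.
Qed.

Definition corners : {set 'I_n * 'I_k * 'I_m} := [set x | coords x \in corner_coords k m].

Lemma card_corners : #|corners| <= 4.
Proof.
rewrite cardE -(size_map coords).
apply: (uniq_leq_size (s2 := corner_coords k m)).
  by rewrite (map_inj_uniq coords_inj) enum_uniq.
by move=> y /mapP[x]; rewrite mem_enum inE => x_corner ->.
Qed.

Lemma corners_resolving : resolving prism corners.
Proof.
apply/forallP => x; apply/forallP => y; apply/implyP => /eqP /rvec_prism eq_xy.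
apply/eqP/coords_inj/(corner_dists_inj n_ge3 (coords_box x) (coords_box y)) => q q_corner.
have [w Ew] : exists w, coords w = q.
  apply: box_coords; move: q_corner; rewrite /corner_coords !inE.
  by case/or4P=> /eqP->; rewrite /in_box /=; lia.
by rewrite -Ew; apply: eq_xy; rewrite inE Ew.
Qed.

End Prism.

Theorem theorem3p4 (n k m : nat) :
  4 <= n -> ~~ odd n -> 3 <= k -> 2 <= m ->
  metric_dim (cart_rel (cart_rel (cycle_rel n) (path_rel k)) (path_rel m)) = 4.
Proof.
move=> n_ge4 n_even k_ge3 m_ge2.
have n_2h : n = n./2 + n./2 by rewrite addnn -{1}(odd_double_half n) (negbTE n_even).
have [n_ge3 k_ge2 h_ge2] : [/\ 3 <= n, 2 <= k & 2 <= n./2] by split; lia.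
apply: (metric_dim_eq (corners_resolving n_ge3 k_ge2 m_ge2) (card_corners n k m)) => Q.
rewrite leqNgt; apply: contraL => Q_le3.
exact/twins_not_resolving/(twins_of_card_le3 n_2h h_ge2 k_ge3 m_ge2 Q_le3).
Qed.
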